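(* Let $\lambda=(\lambda_1,\ldots,\lambda_\ell)$ be a partition with $\ell$ positive parts, let $t$ be an integer with $0\leq t<\lambda_\ell$, and let $\mu=(\lambda_1-t,\ldots,\lambda_\ell-t)$ (the partition whose Young diagram is obtained by deleting the first $t$ columns of that of $\lambda$). Suppose $n\geq\ell$. Then the poset $\mathcal B_\mu^n$ is isomorphic to a principal order ideal in the poset $\mathcal B_\lambda^n$. In particular, if $\mathcal B_\mu^n$ is not a lattice, then $\mathcal B_\lambda^n$ is not a lattice.
   Context: For $N\geq 1$ and a partition $\nu$ with at most $N$ positive parts, $\mathcal B_\nu^N$ is the set of semistandard Young tableaux of shape $\nu$ (rows weakly increasing, columns strictly increasing) with entries in $\{1,\ldots,N+1\}$, partially ordered by the reflexive transitive closure of $T<F_i(T)$ for $i\in\{1,\ldots,N\}$ with $F_i(T)\neq 0$. Here $F_i$ is the type A crystal lowering operator: in the reading word of $T$ (rows read from bottom to top, each row left to right) keep only letters $i$ and $i+1$, replace each $i$ by '')'' and each $i+1$ by ''('', and match parentheses in the usual way; if there is no unmatched '')'', $F_i(T)=0$; otherwise $F_i(T)$ is obtained by changing the entry $i$ corresponding to the rightmost unmatched '')'' into $i+1$. *)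

From mathcomp Require Import all_boot.
From Stdlib Require Import Relations.
Set Implicit Arguments. Unset Strict Implicit. Unset Printing Implicit Defensive.

Definition is_partition (nu : seq nat) : bool :=
  sorted geq nu && all (fun x => 0 < x) nu.

(* A tableau is a list of rows (row 1 first, i.e. top row first). *)
Definition tableau := seq (seq nat).

Definition is_SSYT (N : nat) (nu : seq nat) (T : tableau) : bool :=
  [&& map size T == nu,
      all (fun r => sorted leq r) T,
      all (fun r => all (fun x => (1 <= x <= N.+1)) r) T &
      [forall i : 'I_(size T).-1,
         [forall j : 'I_(size (nth [::] T i.+1)),
            nth 0 (nth [::] T i) j < nth 0 (nth [::] T i.+1) j]]].

Definition reading_word (T : tableau) : seq nat := flatten (rev T).

(* Scanning the word left to right, letters i are ")" and letters i+1 are "(".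
   [opn] counts currently unmatched "("; [best] is the position of the
   rightmost unmatched ")" seen so far. *)
Fixpoint rightmost_unmatched (i : nat) (w : seq nat) (k opn : nat)
    (best : option nat) : option nat :=
  match w with
  | [::] => best
  | x :: w' =>
      if x == i.+1 then rightmost_unmatched i w' k.+1 opn.+1 best
      else if x == i then
        (if opn is opn'.+1 then rightmost_unmatched i w' k.+1 opn' best
         else rightmost_unmatched i w' k.+1 0 (Some k))
      else rightmost_unmatched i w' k.+1 opn best
  end.

(* Crystal lowering operator on words; None stands for 0. *)
Definition F_word (i : nat) (w : seq nat) : option (seq nat) :=
  match rightmost_unmatched i w 0 0 None with
  | None => None
  | Some k => Some (set_nth 0 w k i.+1)
  end.

Definition F_tab (i : nat) (T : tableau) : option tableau :=
  omap (fun w => rev (reshape (shape (rev T)) w)) (F_word i (reading_word T)).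

Definition crystal_step (N : nat) (T S : tableau) : Prop :=
  exists2 i, 1 <= i <= N & F_tab i T = Some S.

Definition crystal_le (N : nat) : relation tableau :=
  clos_refl_trans tableau (crystal_step N).

(* The poset B_nu^N has carrier [is_SSYT N nu] and order [crystal_le N]. *)

Definition is_lattice (P : tableau -> Prop) (le : relation tableau) : Prop :=
  forall x y, P x -> P y ->
    (exists j, [/\ P j, le x j, le y j &
                forall z, P z -> le x z -> le y z -> le j z]) /\
    (exists m, [/\ P m, le m x, le m y &
                forall z, P z -> le z x -> le z y -> le z m]).

From mathcomp Require Import all_boot zify.
From Stdlib Require Import Relations.
Set Implicit Arguments. Unset Strict Implicit. Unset Printing Implicit Defensive.

(* Let f prepend to row r of a tableau of shape mu (rows numbered from 1) t
   letters r.  Then f T is semistandard of shape lam, f is injective, and f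
   commutes with every F_i: the letters prefixed to the rows above the entry
   changed by F_i are smaller than i, while below it the t letters i+1
   prefixed to row i+1 and the t letters i prefixed to row i cancel in the
   bracketing.  Let M be the maximum of B_mu: lowering strictly increases the
   sum of the entries, so every T reaches a tableau killed by all F_i, and
   there is only one such tableau.  Conversely, a tableau S <= f M lies
   entrywise below f M, and rows are bounded below by their index, so the
   first t columns of S are those of f M; hence S is in the image of f, and
   lowering steps below f M never touch these columns.  So f is an order
   isomorphism from B_mu onto the principal ideal of f M in B_lam, and joins
   and meets transfer from B_lam to B_mu. *)

Lemma cat_cons_lt_size (T : Type) (u v u' v' : seq T) (a b : T) :
  u ++ a :: v = u' ++ b :: v' -> size u < size u' ->
  exists m, u' = u ++ a :: m /\ v = m ++ b :: v'.
Proof.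
elim: u u' => [|x u IH] [|y u'] //= [-> E] Hs; first by exists u'.
by have [m [-> ->]] := IH _ E Hs; exists m.
Qed.

Lemma cat_eq_cat_cons (T : Type) (p q u v : seq T) a : p ++ q = u ++ a :: v ->
  (exists x y, [/\ p = x ++ a :: y, u = x & v = y ++ q]) \/
  (exists u', u = p ++ u' /\ q = u' ++ a :: v).
Proof.
elim: p u => [|z p IH] u /=; first by move=> ->; right; exists u.
case: u => [|y u] /= [-> E]; first by left; exists [::], p; rewrite E.
case: (IH _ E) => [[x [y' [-> -> ->]]]|[u' [-> ->]]].
  by left; exists (y :: x), y'.
by right; exists u'.
Qed.

Lemma cat_eq_cat_le (T : Type) (u v p q : seq T) : u ++ v = p ++ q ->
  size p <= size u -> u = p ++ drop (size p) u /\ q = drop (size p) u ++ v.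
Proof.
elim: p u => [|a p IH] u; first by rewrite drop0 => ->.
case: u => [|b u] //= [-> E] H.
by have [E1 E2] := IH _ E H; rewrite -E1.
Qed.

Lemma set_nth_size_cat (u v : seq nat) a b :
  set_nth 0 (u ++ a :: v) (size u) b = u ++ b :: v.
Proof. by elim: u => //= x u ->. Qed.

Lemma nth_cat_mid_le (x y : seq nat) a b c :
  a <= b -> nth 0 (x ++ a :: y) c <= nth 0 (x ++ b :: y) c.
Proof. by move=> Hab; rewrite !nth_cat; case: ltnP => // _; case: (c - size x). Qed.

Lemma nth_cat_mid_neq (x y : seq nat) a b c : c != size x ->
  nth 0 (x ++ a :: y) c = nth 0 (x ++ b :: y) c.
Proof.
by move=> Nc; rewrite !nth_cat; case: ltnP => // Hc; case E: (c - size x) => //; lia.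
Qed.

Lemma count_ge_prefix (s : seq nat) (p : pred nat) m : m <= size s ->
  (forall j, j < m -> p (nth 0 s j)) -> m <= count p s.
Proof.
elim: s m => [|a s IH] [|m] //= Hm H.
have := IH m Hm (fun j => H j.+1); have := H 0 erefl; case: (p a) => //=; lia.
Qed.

Lemma sorted_nth_le (s : seq nat) c1 c2 : sorted leq s -> c1 <= c2 -> c2 < size s ->
  nth 0 s c1 <= nth 0 s c2.
Proof.
move=> Hs H12 H2; apply: (sorted_leq_nth leq_trans leqnn 0 Hs) => //.
by rewrite inE (leq_ltn_trans H12 H2).
Qed.

Lemma sorted_split (s : seq nat) j : sorted leq s ->
  exists s1 s2, [/\ s = s1 ++ s2, all (fun x => x < j) s1 & all (fun x => j <= x) s2].
Proof.
elim: s => [|a s IH] Hp; first by exists [::], [::].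
have Ha : all (leq a) s := order_path_min leq_trans Hp.
case: (ltnP a j) => Haj; last first.
  exists [::], (a :: s); split=> //=; rewrite Haj /=.
  by apply/allP => z /(allP Ha); apply: leq_trans.
have [s1 [s2 [-> H1 H2]]] := IH (path_sorted Hp).
by exists (a :: s1), s2; rewrite /= Haj.
Qed.

Lemma sorted_nseq (T : Type) (r : rel T) m x : r x x -> sorted r (nseq m x).
Proof. by move=> Hx; case: m => //= m; elim: m => //= m ->; rewrite Hx. Qed.

Lemma sorted_leq_cat (s1 s2 : seq nat) : sorted leq s1 -> sorted leq s2 ->
  {in s1 & s2, forall x y, x <= y} -> sorted leq (s1 ++ s2).
Proof.
case: s1 => //= a s1 Hs1 Hs2 H; rewrite cat_path Hs1.
by case: s2 Hs2 H => //= b s2 -> H; rewrite andbT H ?mem_last ?mem_head.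
Qed.

Lemma sorted_cat_mid_replace (T : Type) (e : rel T) A R R' B :
  sorted e (A ++ R :: B) -> (forall U, e U R -> e U R') ->
  (if B is D :: _ then e R' D else true) -> sorted e (A ++ R' :: B).
Proof.
rewrite !sorted_cat_cons => /andP[HA HB] HU HD; apply/andP; split.
  by case: A HA => //= a A; rewrite !rcons_path => /andP[-> /HU].
by case: B HB HD => //= D B /andP[_ ->] ->.
Qed.

Lemma sorted_geq_last (s : seq nat) : sorted geq s -> all (leq (last 0 s)) s.
Proof.
case: s => //= a s; elim: s a => [|b s IH] a /=; first by rewrite leqnn.
by case/andP=> Hab /IH /andP[Hb ->]; rewrite (leq_trans Hb Hab) Hb.
Qed.

Lemma sorted_eq_count K (R Q : seq nat) : sorted leq R -> sorted leq Q ->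
  size R = size Q -> (forall c, nth 0 R c <= nth 0 Q c) ->
  (forall v, v <= K -> count_mem v R <= count_mem v Q) ->
  all (leq^~ K.+1) Q -> R = Q.
Proof.
elim: R Q => [|a R IH] [|b Q] //= HR HQ [Es] Hle Hc /andP[HbK HQK].
have Hab : a <= b := Hle 0.
have HQb : all (leq b) Q := order_path_min leq_trans HQ.
case: (ltnP a b) => Hlt.
  have HaK : a <= K by rewrite -ltnS (leq_trans Hlt HbK).
  have HQa : count_mem a Q = 0.
    by apply/count_memPn/negP => /(allP HQb); rewrite leqNgt Hlt.
  by have := Hc a HaK; rewrite eqxx HQa (gtn_eqF Hlt).
have Eab : a = b by apply/eqP; rewrite eqn_leq Hab Hlt.
subst b; congr (_ :: _); apply: IH => //.
- exact: path_sorted HR.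
- exact: path_sorted HQ.
- by move=> c; exact: (Hle c.+1).
- by move=> v Hv; have := Hc v Hv; rewrite leq_add2l.
Qed.

(** * Bracketing *)

(* [opens i o s] is the number of unmatched "(" (letters [i.+1]) after reading
   [s] with [o] of them pending; a ")" (letter [i]) read when none is pending is
   unmatched, and truncated subtraction leaves the count at 0. *)
Definition open_step (i o x : nat) : nat := o + (x == i.+1) - (x == i).

Definition opens (i o : nat) (s : seq nat) : nat := foldl (open_step i) o s.

Definition has_unmatched (i o : nat) (w : seq nat) : Prop :=
  exists u v, w = u ++ i :: v /\ opens i o u = 0.

Lemma opens_cat i o s1 s2 : opens i o (s1 ++ s2) = opens i (opens i o s1) s2.
Proof. exact: foldl_cat. Qed.

Lemma open_step_close0 i : open_step i 0 i = 0.
Proof. by rewrite /open_step (ltn_eqF (ltnSn i)). Qed.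

Lemma opens_mono i o1 o2 s : o1 <= o2 -> opens i o1 s <= opens i o2 s.
Proof. by elim: s o1 o2 => //= x s IH o1 o2 Ho; apply: IH; rewrite /open_step; lia. Qed.

Lemma opens_count i o s : o + count_mem i.+1 s <= opens i o s + count_mem i s.
Proof.
by elim: s o => //= x s IH o; have := IH (open_step i o x); rewrite /open_step; lia.
Qed.

Lemma opens_no_close i o s : count_mem i s = 0 -> opens i o s = o + count_mem i.+1 s.
Proof.
elim: s o => /= [o _|x s IH o Hs]; first by rewrite addn0.
by rewrite IH /open_step; lia.
Qed.

Lemma opens_nseq_close i o t : opens i o (nseq t i) = o - t.
Proof. by elim: t o => /= [|t IH] o; rewrite ?subn0 // IH /open_step; lia. Qed.

Lemma opens_nseq_open i o t : opens i o (nseq t i.+1) = o + t.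
Proof. by elim: t o => /= [|t IH] o; rewrite ?addn0 // IH /open_step; lia. Qed.

Lemma has_unmatched_cons i o x w :
  has_unmatched i o (x :: w) <->
  (x == i) && (o == 0) \/ has_unmatched i (open_step i o x) w.
Proof.
split=> [[[|y u] [v [[-> Ew] Hu]]]|[/andP[/eqP-> /eqP->]|[u [v [-> Hu]]]]].
- by left; rewrite eqxx -[o]/(opens i o [::]) Hu.
- by right; exists u, v.
- by exists [::], w.
- by exists (x :: u), v.
Qed.

Lemma has_unmatched_cat i o p q : has_unmatched i o p -> has_unmatched i o (p ++ q).
Proof. by case=> u [v [-> Hu]]; exists u, (v ++ q); rewrite -catA. Qed.

Lemma opens_balanced i p :
  ~ has_unmatched i 0 p -> count_mem i p + opens i 0 p = count_mem i.+1 p.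
Proof.
elim/last_ind: p => //= p x IH Hn.
have Hp : ~ has_unmatched i 0 p by move/(has_unmatched_cat [:: x]); rewrite cats1.
have Hx : x = i -> 0 < opens i 0 p.
  move=> Ex; rewrite lt0n; apply/eqP => H0; apply: Hn.
  by exists p, [::]; rewrite -cats1 Ex.
have := IH Hp; rewrite -cats1 opens_cat !count_cat /= /open_step.
by case: (eqVneq x i) Hx => [-> /(_ erefl)|_ _]; lia.
Qed.

Lemma no_unmatched_prefix_count i p q :
  ~ has_unmatched i 0 (p ++ q) -> count_mem i p <= count_mem i.+1 p.
Proof.
by move=> Hn; have := opens_balanced (fun H => Hn (has_unmatched_cat q H)); lia.
Qed.

Definition brackets (i : nat) (s : seq nat) : seq nat :=
  filter (fun x => (x == i) || (x == i.+1)) s.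

Lemma brackets_cat i s1 s2 : brackets i (s1 ++ s2) = brackets i s1 ++ brackets i s2.
Proof. exact: filter_cat. Qed.

Lemma opens_brackets i o s : opens i o s = opens i o (brackets i s).
Proof.
elim: s o => //= x s IH o; case: ifP => /= Hx; rewrite IH //; congr opens.
by move/norP: Hx => [/negbTE Hi /negbTE Hi1]; rewrite /open_step Hi Hi1 addn0 subn0.
Qed.

Lemma brackets_nil i s :
  all (fun x => (x < i) || (i.+1 < x)) s -> brackets i s = [::].
Proof. by elim: s => //= x s IH /andP[Hx /IH ->]; case: ifP => //; lia. Qed.

Lemma opens_id i o s : all (fun x => (x < i) || (i.+1 < x)) s -> opens i o s = o.
Proof. by move=> Hs; rewrite opens_brackets brackets_nil. Qed.

Lemma has_unmatched_brackets i o s :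
  has_unmatched i o s <-> has_unmatched i o (brackets i s).
Proof.
split=> [[u [v [-> Hu]]]|[u' [v' [E Hu']]]].
  exists (brackets i u), (brackets i v); split; last by rewrite -opens_brackets.
  by rewrite /brackets filter_cat /= eqxx.
suff [u [v [-> Eu]]] : exists u v, s = u ++ i :: v /\ brackets i u = u'.
  by exists u, v; rewrite opens_brackets Eu.
elim: s u' E {Hu'} => [|x s IH] u' /=; first by case: u'.
case: ifP => Hx; last first.
  by move=> /IH[u [v [-> <-]]]; exists (x :: u), v; rewrite /= Hx.
case: u' => [|y u'] /= [Ey]; first by exists [::], s; rewrite Ey.
by move=> /IH[u [v [-> <-]]]; exists (x :: u), v; rewrite /= Hx Ey.
Qed.

Lemma has_unmatched_eq_brackets i o s1 s2 : brackets i s1 = brackets i s2 ->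
  has_unmatched i o s1 -> has_unmatched i o s2.
Proof.
by rewrite (has_unmatched_brackets _ _ s1) (has_unmatched_brackets _ _ s2) => ->.
Qed.

(** * The lowering operators *)

Lemma rightmost_unmatched_cons i x w k o b :
  rightmost_unmatched i (x :: w) k o b =
  rightmost_unmatched i w k.+1 (open_step i o x)
    (if (x == i) && (o == 0) then Some k else b).
Proof.
rewrite /= /open_step; case: (eqVneq x i.+1) => [->|_].
  by rewrite (gtn_eqF (ltnSn i)) addn1 subn0.
by case: (eqVneq x i) => _; case: o => [|o]; rewrite /= ?addn0 ?subn0 ?subn1.
Qed.

Lemma rightmost_unmatchedP i w k o b :
  (rightmost_unmatched i w k o b = b /\ ~ has_unmatched i o w) \/
  (exists u v, [/\ w = u ++ i :: v, opens i o u = 0, ~ has_unmatched i 0 v &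
     rightmost_unmatched i w k o b = Some (k + size u)]).
Proof.
elim: w k o b => [|x w IH] k o b.
  by left; split=> // -[[|? ?] [? []]].
rewrite rightmost_unmatched_cons.
set b' := if _ then _ else _.
case: (IH k.+1 (open_step i o x) b') => [[-> Hn]|[u [v [-> Hu Hv ->]]]].
- rewrite /b'; case: ifP => [/andP[/eqP Ex /eqP Eo]|Nxo].
    right; exists [::], w; subst x o; rewrite open_step_close0 in Hn.
    by rewrite addn0.
  by left; split=> // /has_unmatched_cons []; rewrite ?Nxo.
- by right; exists (x :: u), v; rewrite addSnnS.
Qed.

Lemma F_word_Some i w w' : F_word i w = Some w' ->
  exists u v, [/\ w = u ++ i :: v, opens i 0 u = 0, ~ has_unmatched i 0 v &
                  w' = u ++ i.+1 :: v].
Proof.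
rewrite /F_word.
case: (rightmost_unmatchedP i w 0 0 None) => [[-> _]//|[u [v [-> Hu Hv ->]]]].
by case=> <-; exists u, v; rewrite add0n set_nth_size_cat.
Qed.

Lemma F_word_None i w : F_word i w = None -> ~ has_unmatched i 0 w.
Proof.
rewrite /F_word.
by case: (rightmost_unmatchedP i w 0 0 None) => [[_ ?]|[u [v [_ _ _ ->]]]].
Qed.

Lemma unmatched_close_unique i u v u' v' :
  u ++ i :: v = u' ++ i :: v' -> opens i 0 u = 0 -> opens i 0 u' = 0 ->
  ~ has_unmatched i 0 v -> ~ has_unmatched i 0 v' -> u = u'.
Proof.
wlog Hs : u v u' v' / size u <= size u'.
  move=> H E Hu Hu' Hv Hv'; case: (leqP (size u) (size u')) => [|/ltnW] Hs.
    exact: H E Hu Hu' Hv Hv'.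
  exact/esym/(H u' v' u v).
move=> E Hu Hu' Hv _; move: Hs; rewrite leq_eqVlt => /orP[/eqP Es|Hlt].
  by move/eqP: E; rewrite eqseq_cat // => /andP[/eqP].
have [m [Eu' Ev]] := cat_cons_lt_size E Hlt.
case: Hv; exists m, v'; split=> //.
by move: Hu'; rewrite Eu' opens_cat Hu /= open_step_close0.
Qed.

Lemma F_word_cat_cons i u v : opens i 0 u = 0 -> ~ has_unmatched i 0 v ->
  F_word i (u ++ i :: v) = Some (u ++ i.+1 :: v).
Proof.
move=> Hu Hv; rewrite /F_word.
case: (rightmost_unmatchedP i (u ++ i :: v) 0 0 None) =>
    [[_ []]|[u' [v' [E Hu' Hv' ->]]]]; first by exists u, v.
have Eu := unmatched_close_unique E Hu Hu' Hv Hv'; subst u'.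
by move/eqP: E; rewrite eqseq_cat // => /andP[_ /eqP[->]]; rewrite set_nth_size_cat.
Qed.

Lemma reading_word_cat_cons A R B :
  reading_word (A ++ R :: B) = reading_word B ++ R ++ reading_word A.
Proof. by rewrite /reading_word rev_cat rev_cons -cats1 !flatten_cat /= cats0 catA. Qed.

Lemma reading_word_cons R B : reading_word (R :: B) = reading_word B ++ R.
Proof. by rewrite /reading_word rev_cons flatten_rcons. Qed.

Lemma reading_word_cat_mid A x z y B :
  reading_word (A ++ (x ++ z :: y) :: B) =
  (reading_word B ++ x) ++ z :: y ++ reading_word A.
Proof. by rewrite reading_word_cat_cons -!catA. Qed.

Lemma all_reading_word (p : pred nat) L : all p (reading_word L) = all (all p) L.
Proof. by elim: L => //= R L IH; rewrite reading_word_cons all_cat IH andbC. Qed.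

Lemma count_reading_word (p : pred nat) L :
  count p (reading_word L) = count p (flatten L).
Proof. by rewrite /reading_word !count_flatten map_rev sumn_rev. Qed.

Lemma shape_cat_mid (A B : tableau) x y z z' :
  shape (A ++ (x ++ z :: y) :: B) = shape (A ++ (x ++ z' :: y) :: B).
Proof. by rewrite /shape !map_cat /= !size_cat. Qed.

Lemma reading_wordK (T T' : tableau) : shape T = shape T' ->
  rev (reshape (shape (rev T)) (reading_word T')) = T'.
Proof. by move=> E; rewrite shape_rev E -shape_rev flattenK revK. Qed.

Lemma flatten_eq_cat_cons (s : tableau) u a v : flatten s = u ++ a :: v ->
  exists B x y C, [/\ s = B ++ (x ++ a :: y) :: C, u = flatten B ++ x &
                      v = y ++ flatten C].
Proof.
elim: s u => [|R s IH] u /=; first by case: u.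
case/(@cat_eq_cat_cons nat) => [[x [y [-> -> ->]]]|[u' [-> /IH]]].
  by exists [::], x, y, s.
move=> [B [x [y [C [-> -> ->]]]]].
by exists (R :: B), x, y, C; rewrite /= catA.
Qed.

Lemma F_tab_Some i T S : F_tab i T = Some S ->
  exists Top x y Bot, [/\ T = Top ++ (x ++ i :: y) :: Bot,
    S = Top ++ (x ++ i.+1 :: y) :: Bot,
    opens i 0 (reading_word Bot ++ x) = 0 &
    ~ has_unmatched i 0 (y ++ reading_word Top)].
Proof.
rewrite /F_tab; case E: (F_word i (reading_word T)) => [w'|] //= [<-].
have [u [v [Ew Hu Hv ->]]] := F_word_Some E.
have [B [x [y [C [ET Eu Ev]]]]] := flatten_eq_cat_cons Ew.
have {}ET : T = rev C ++ (x ++ i :: y) :: rev B.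
  by rewrite -[T]revK ET rev_cat rev_cons -cats1 -catA.
have Erw : forall Z : tableau, reading_word (rev Z) = flatten Z.
  by move=> Z; rewrite /reading_word revK.
exists (rev C), x, y, (rev B); rewrite !Erw -Eu -Ev; split=> //.
rewrite Eu Ev -!Erw -reading_word_cat_mid reading_wordK // ET; exact: shape_cat_mid.
Qed.

Lemma F_tab_cat_mid i Top x y Bot :
  opens i 0 (reading_word Bot ++ x) = 0 ->
  ~ has_unmatched i 0 (y ++ reading_word Top) ->
  F_tab i (Top ++ (x ++ i :: y) :: Bot) = Some (Top ++ (x ++ i.+1 :: y) :: Bot).
Proof.
move=> Hu Hv; rewrite /F_tab reading_word_cat_mid F_word_cat_cons //=.
rewrite -reading_word_cat_mid reading_wordK //; exact: shape_cat_mid.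
Qed.

Lemma F_tab_None i T : F_tab i T = None -> ~ has_unmatched i 0 (reading_word T).
Proof. by rewrite /F_tab; case E: (F_word i _) => //= _; exact: F_word_None. Qed.

(** * Lowering preserves semistandardness *)

Definition col_lt (A B : seq nat) : bool :=
  all (fun c => nth 0 A c < nth 0 B c) (iota 0 (size B)).

Definition ssyt (N : nat) (nu : seq nat) (T : tableau) : Prop :=
  [/\ map size T = nu, all (sorted leq) T,
      all (all (fun x => 1 <= x <= N.+1)) T & sorted col_lt T].

Lemma col_ltP A B :
  reflect (forall c, c < size B -> nth 0 A c < nth 0 B c) (col_lt A B).
Proof.
apply: (iffP allP) => H c; last by rewrite mem_iota => /andP[_]; apply: H.
by move=> Hc; apply: H; rewrite mem_iota.
Qed.

Lemma is_SSYTP N nu T : is_SSYT N nu T <-> ssyt N nu T.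
Proof.
rewrite /is_SSYT; have -> : [forall i : 'I_(size T).-1,
    [forall j : 'I_(size (nth [::] T i.+1)),
      nth 0 (nth [::] T i) j < nth 0 (nth [::] T i.+1) j]] = sorted col_lt T.
  apply/forallP/(sortedP [::]) => H i.
    move=> Hi; have Hi' : i < (size T).-1 by lia.
    by apply/col_ltP => c Hc; exact: (forallP (H (Ordinal Hi')) (Ordinal Hc)).
  apply/forallP => -[j Hj] /=; apply: (col_ltP _ _ (H i _)) => //.
  by have := ltn_ord i; lia.
by split=> [/and4P[/eqP]|[-> -> -> ->]]; rewrite ?eqxx.
Qed.

Definition entrywise_le (T S : tableau) : Prop :=
  map size T = map size S /\
  forall r c, nth 0 (nth [::] T r) c <= nth 0 (nth [::] S r) c.

Lemma entrywise_le_trans T1 T2 T3 :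
  entrywise_le T1 T2 -> entrywise_le T2 T3 -> entrywise_le T1 T3.
Proof.
move=> [E1 H1] [E2 H2]; split; first by rewrite E1.
by move=> r c; apply: leq_trans (H1 r c) (H2 r c).
Qed.

Lemma F_tab_entrywise_le i T S : F_tab i T = Some S -> entrywise_le T S.
Proof.
case/F_tab_Some => Top [x [y [Bot [-> -> _ _]]]]; split.
  by rewrite !map_cat /= !size_cat.
move=> r c; rewrite !nth_cat; case: ltnP => // _.
by case: (r - size Top) => [|?] //=; apply: nth_cat_mid_le.
Qed.

Lemma crystal_le_entrywise N T S : crystal_le N T S -> entrywise_le T S.
Proof.
elim=> [T1 S1 [i _ /F_tab_entrywise_le //]|T1|T1 T2 T3 _ H1 _ H2]; first by split.
exact: entrywise_le_trans H1 H2.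
Qed.

Lemma sorted_row_run (x y : seq nat) i : sorted leq (x ++ i :: y) ->
  exists k, [/\ k <= size x, count_mem i x = size x - k &
                forall c, k <= c <= size x -> nth 0 (x ++ i :: y) c = i].
Proof.
move=> HR; have [x1 [x2 [Ex H1 H2]]] := sorted_split i (cat_sorted2 HR).1.
have Hx_le : forall c, c < size x -> nth 0 x c <= i.
  move=> c Hc; have := sorted_nth_le HR (ltnW Hc) _.
  by rewrite !nth_cat Hc ltnn subnn size_cat /=; apply; lia.
have Hx2 : all (pred1 i) x2.
  apply/allP => z Hz; rewrite /= eqn_leq (allP H2 z Hz) andbT.
  have /(nthP 0)[c Hc <-] : z \in x by rewrite Ex mem_cat Hz orbT.
  exact: Hx_le.
have Hx1 : i \notin x1 by apply/negP => /(allP H1); rewrite ltnn.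
exists (size x1); split.
- by rewrite Ex size_cat leq_addr.
- rewrite all_count in Hx2.
  by rewrite Ex count_cat (count_memPn Hx1) (eqP Hx2) size_cat add0n addKn.
move=> c /andP[Hc1 Hc2]; rewrite nth_cat; case: ltnP => Hc; last first.
  by rewrite (_ : c = size x) ?subnn //; apply/eqP; rewrite eqn_leq Hc2.
rewrite Ex nth_cat ltnNge Hc1 /=; apply/eqP/(allP Hx2)/mem_nth.
by rewrite ltn_subLR // -size_cat -Ex.
Qed.

(* An [i] lying directly above an [i.+1] is matched: the run of [i]s ending
   at it sits above a longer run of [i.+1]s read earlier.  Hence [F_i] keeps
   columns strict. *)
Lemma opens_column_pos i x y D :
  sorted leq (x ++ i :: y) -> sorted leq D -> col_lt (x ++ i :: y) D ->
  size x < size D -> nth 0 D (size x) = i.+1 -> 0 < opens i 0 (D ++ x).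
Proof.
move=> HR HD /col_ltP HRD Hx HDx.
have [k [Hk Hcx Hrun]] := sorted_row_run HR.
have HDrun : forall c, k <= c <= size x -> nth 0 D c = i.+1.
  move=> c /andP[Hc1 Hc2]; apply/eqP; rewrite eqn_leq -{1}HDx sorted_nth_le //=.
  by rewrite -(Hrun c) ?Hc1 // HRD //; apply: leq_ltn_trans Hx.
have Hopen : (size x - k).+1 <= count_mem i.+1 (drop k D).
  apply: count_ge_prefix; first by rewrite size_drop; lia.
  by move=> j Hj; rewrite nth_drop /= HDrun //; lia.
have Hclose : count_mem i (drop k D) = 0.
  apply/count_memPn/negP => /(nthP 0)[j]; rewrite size_drop nth_drop => Hj Ej.
  have Hj' : k + j < size D by rewrite -ltn_subRL.
  by have := sorted_nth_le HD (leq_addr j k) Hj'; rewrite Ej HDrun ?leqnn ?Hk // ltnn.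
rewrite -(cat_take_drop k D) -catA opens_cat.
apply: leq_trans (opens_mono _ _ (leq0n _)).
rewrite opens_cat (opens_no_close _ Hclose).
by have := opens_count i (0 + count_mem i.+1 (drop k D)) x; rewrite Hcx; lia.
Qed.

Lemma sorted_row_bump (x y : seq nat) i :
  sorted leq (x ++ i :: y) -> ohead y != Some i -> sorted leq (x ++ i.+1 :: y).
Proof.
rewrite !sorted_cat_cons => /andP[Hx Hy] Hhd; apply/andP; split.
  by case: x Hx => //= a x; rewrite !rcons_path => /andP[-> /leqW].
by case: y Hy Hhd => //= z y /andP[Hiz ->] Hz; rewrite andbT ltn_neqAle Hiz eq_sym Hz.
Qed.

Lemma col_lt_bump_above U x y i :
  col_lt U (x ++ i :: y) -> col_lt U (x ++ i.+1 :: y).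
Proof.
move/col_ltP => H; apply/col_ltP => c; rewrite !size_cat /= => Hc.
by apply: leq_trans (H c _) (nth_cat_mid_le _ _ _ (leqnSn i)); rewrite size_cat.
Qed.

Lemma col_lt_bump_below i x y D :
  sorted leq (x ++ i :: y) -> sorted leq D -> col_lt (x ++ i :: y) D ->
  opens i 0 (D ++ x) = 0 -> col_lt (x ++ i.+1 :: y) D.
Proof.
move=> HR HD HRD Hop; apply/col_ltP => c Hc.
case: (eqVneq c (size x)) => [Ec|Nc]; last first.
  by rewrite -(nth_cat_mid_neq _ i _ Nc); apply: (col_ltP _ _ HRD).
subst c; have HiD := col_ltP _ _ HRD _ Hc; rewrite !nth_cat ltnn subnn /= in HiD *.
rewrite ltn_neqAle HiD andbT; apply/eqP => HDx.
by have := opens_column_pos HR HD HRD Hc (esym HDx); rewrite Hop.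
Qed.

Lemma F_tab_ssyt N nu T S i :
  ssyt N nu T -> 1 <= i <= N -> F_tab i T = Some S -> ssyt N nu S.
Proof.
move=> [Hsz Hrows Hb Hcol] Hi /F_tab_Some[Top [x [y [Bot [ET -> Hop Hn]]]]].
subst T.
have HR : sorted leq (x ++ i :: y) by move: Hrows; rewrite all_cat /= => /and3P[].
have HR' : sorted leq (x ++ i.+1 :: y).
  apply: sorted_row_bump HR _; apply/eqP => Ey; apply: Hn.
  exists [::], (behead y ++ reading_word Top); split=> //.
  by move: Ey; case: (y) => //= _ ? [->].
split.
- by rewrite -Hsz !map_cat /= !size_cat.
- by move: Hrows; rewrite !all_cat /= HR' => /and3P[-> _ ->].
- move: Hb; rewrite !all_cat /= !all_cat /= => /and3P[-> /and3P[-> _ ->] ->] /=.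
  by rewrite !andbT; lia.
apply: (sorted_cat_mid_replace Hcol); first by move=> U; apply: col_lt_bump_above.
clear Hb Hsz; case: Bot Hcol Hop Hrows => // D Bot Hcol Hop Hrows.
have HD : sorted leq D by move: Hrows; rewrite all_cat /= => /and3P[_ _ /andP[]].
have HRD : col_lt (x ++ i :: y) D by move: Hcol; rewrite sorted_cat_cons /= => /and3P[].
apply: col_lt_bump_below HR HD HRD _.
have := @opens_mono i 0 (opens i 0 (reading_word Bot)) (D ++ x) (leq0n _).
by rewrite -opens_cat catA -reading_word_cons Hop leqn0 => /eqP.
Qed.

Lemma crystal_le_ssyt N nu T S : ssyt N nu T -> crystal_le N T S -> ssyt N nu S.
Proof.
move=> HT H; elim: H HT => [T1 S1 [i Hi HF]|//|T1 T2 T3 _ H12 _ H23] HT.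
  exact: F_tab_ssyt HT Hi HF.
exact: H23 (H12 HT).
Qed.

(** * Prepending columns *)

Fixpoint prepend_cols (t a : nat) (T : tableau) : tableau :=
  if T is R :: T' then (nseq t a ++ R) :: prepend_cols t a.+1 T' else [::].

Fixpoint rows_ge (a : nat) (T : tableau) : Prop :=
  if T is R :: T' then all (leq a) R /\ rows_ge a.+1 T' else True.

Lemma prepend_cols_cat t a A R B : prepend_cols t a (A ++ R :: B) =
  prepend_cols t a A ++ (nseq t (a + size A) ++ R) :: prepend_cols t (a + size A).+1 B.
Proof. by elim: A a => [|R0 A IH] a /=; rewrite ?addn0 // IH addSnnS. Qed.

Lemma prepend_cols_eq_cat t a T A' R' B' : prepend_cols t a T = A' ++ R' :: B' ->
  exists A R B, [/\ T = A ++ R :: B, A' = prepend_cols t a A,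
    R' = nseq t (a + size A) ++ R & B' = prepend_cols t (a + size A).+1 B].
Proof.
elim: T a A' => [|R0 T IH] a [|X A'] //= [E1 E2].
  by exists [::], R0, T; rewrite addn0.
have [A [R [B [-> -> -> ->]]]] := IH _ _ E2.
by exists (R0 :: A), R, B; rewrite /= E1 addSnnS.
Qed.

Lemma size_prepend_cols t a T : size (prepend_cols t a T) = size T.
Proof. by elim: T a => //= R T IH a; rewrite IH. Qed.

Lemma prepend_cols_inj t a : injective (prepend_cols t a).
Proof.
move=> T1; elim: T1 a => [|R1 T1 IH] a [|R2 T2] //= [/eqP].
by rewrite eqseq_cat // => /andP[_ /eqP ->] /IH ->.
Qed.

Lemma rows_ge_cat a A R B : rows_ge a (A ++ R :: B) ->
  all (leq (a + size A)) R /\ rows_ge (a + size A).+1 B.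
Proof.
by elim: A a => [|R0 A IH] a /=; rewrite ?addn0 // => -[_ /IH]; rewrite addSnnS.
Qed.

Lemma rows_ge_all a L : rows_ge a L -> all (all (leq a)) L.
Proof.
elim: L a => //= R L IH a [-> /IH]; apply: sub_all => R'.
by apply: sub_all => z; apply: leq_trans.
Qed.

Lemma prepend_cols_all t a L : rows_ge a L -> all (all (leq a)) (prepend_cols t a L).
Proof.
elim: L a => //= R L IH a [HR /IH HL]; rewrite all_cat HR andbT; apply/andP; split.
  by apply/allP => z /nseqP[->].
by apply: sub_all HL => R'; apply: sub_all => z; apply: leq_trans.
Qed.

Lemma rows_ge_col_lt a T : sorted col_lt T -> sorted geq (map size T) ->
  all (leq a) (head [::] T) -> rows_ge a T.
Proof.
elim: T a => //= R T IH a HT Hsz HR; split=> //.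
apply: IH; [exact: path_sorted HT | exact: path_sorted Hsz |].
case: T HT Hsz => //= D T /andP[/col_ltP HRD _] /andP[HDR _].
apply/(all_nthP 0) => c Hc.
exact: leq_ltn_trans (allP HR _ (mem_nth 0 (leq_trans Hc HDR))) (HRD c Hc).
Qed.

Lemma ssyt_rows_ge N nu T : sorted geq nu -> ssyt N nu T -> rows_ge 1 T.
Proof.
move=> Hnu [Hsz _ Hb Hcol]; apply: rows_ge_col_lt; rewrite ?Hsz //.
by case: T Hb {Hsz Hcol} => //= R T /andP[/allP HR _]; apply/allP => z /HR /andP[].
Qed.

Lemma brackets_prepend_cols i t a L : a + size L <= i ->
  brackets i (reading_word (prepend_cols t a L)) = brackets i (reading_word L).
Proof.
elim: L a => //= R L IH a H.
rewrite !reading_word_cons !brackets_cat IH; last by lia.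
by rewrite (@brackets_nil _ (nseq t a)) //; apply/allP => z /nseqP[-> _]; lia.
Qed.

(* The [t] letters [i.+1] prefixed to row [i+1] and the [t] letters [i]
   prefixed to row [i] cancel; the other prefixes contain no bracket. *)
Lemma opens_prepend_cols i t b L : b <= i -> rows_ge b.+1 L ->
  opens i 0 (reading_word (prepend_cols t b.+1 L) ++ nseq t b) =
  opens i 0 (reading_word L).
Proof.
have off_nseq : forall c, c < i -> all (fun x => (x < i) || (i.+1 < x)) (nseq t c).
  by move=> c Hc; apply/allP => z /nseqP[-> _]; rewrite Hc.
elim: L b => [|R L IH] b Hb /=.
  move=> _; case: (ltngtP b i) Hb => // [/off_nseq Hoff|->] _.
    exact: opens_id.
  exact: opens_nseq_close.
move=> [HR HL]; rewrite !reading_word_cons -!catA.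
case: (ltngtP b i) Hb => // [Hbi|Ebi] _.
  by rewrite catA opens_cat IH // !opens_cat (opens_id _ (off_nseq _ Hbi)).
subst b.
have off_ge : forall L', all (all (leq i.+2)) L' ->
    all (fun x => (x < i) || (i.+1 < x)) (reading_word L').
  move=> L' HL'; rewrite all_reading_word; apply: sub_all HL' => R'.
  by apply: sub_all => z /=; lia.
have HR0 : count_mem i R = 0.
  by apply/count_memPn/negP => /(allP HR); rewrite ltnn.
rewrite !opens_cat (opens_id _ (off_ge _ (prepend_cols_all _ HL))).
rewrite (opens_id _ (off_ge _ (rows_ge_all HL))) opens_nseq_open opens_nseq_close.
by rewrite !opens_no_close //; lia.
Qed.

Lemma F_tab_prepend_cols t i T S : rows_ge 1 T -> F_tab i T = Some S ->
  F_tab i (prepend_cols t 1 T) = Some (prepend_cols t 1 S).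
Proof.
move=> HT /F_tab_Some[Top [x [y [Bot [ET -> Hop Hn]]]]]; subst T.
have [HR HB] := rows_ge_cat HT.
have Hi : 1 + size Top <= i by move: HR; rewrite all_cat /= => /and3P[].
rewrite !prepend_cols_cat !catA; apply: F_tab_cat_mid.
  by rewrite catA opens_cat opens_prepend_cols // -opens_cat.
move=> H; apply: Hn; apply: has_unmatched_eq_brackets H.
by rewrite !brackets_cat brackets_prepend_cols.
Qed.

Lemma F_tab_prepend_cols_inv t i T T' : rows_ge 1 T ->
  F_tab i (prepend_cols t 1 T) = Some (prepend_cols t 1 T') -> F_tab i T = Some T'.
Proof.
move=> HT /F_tab_Some[Top [x' [y [Bot [ET ET' Hop Hn]]]]].
have [A [R [B [ET1 ETop ER EBot]]]] := prepend_cols_eq_cat ET.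
have [A2 [R2 [_ [_ ETop2 ER2 _]]]] := prepend_cols_eq_cat ET'.
have HsA : size A2 = size A.
  by rewrite -(size_prepend_cols t 1 A2) -ETop2 ETop size_prepend_cols.
rewrite HsA in ER2; subst T Top Bot.
have [HR HB] := rows_ge_cat HT.
(* The changed entry lies outside the prefix, on which [T] and [T'] agree. *)
have Ht : t <= size x'.
  rewrite leqNgt; apply/negP => Hx.
  have := congr1 (nth 0 ^~ (size x')) ER; have := congr1 (nth 0 ^~ (size x')) ER2.
  rewrite /= !nth_cat ltnn subnn size_nseq Hx !nth_nseq Hx /= => <- /eqP.
  by rewrite eq_sym (gtn_eqF (ltnSn _)).
have Hsz : size (nseq t (1 + size A)) <= size x' by rewrite size_nseq.
have [Ex' ER0] := cat_eq_cat_le ER Hsz.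
rewrite size_nseq in Ex' ER0; set x := drop t x' in Ex' ER0.
rewrite ER0 in HR; have Hi : 1 + size A <= i by move: HR; rewrite all_cat /= => /and3P[].
have HFT : F_tab i (A ++ (x ++ i :: y) :: B) = Some (A ++ (x ++ i.+1 :: y) :: B).
  apply: F_tab_cat_mid.
    by move: Hop; rewrite Ex' catA opens_cat opens_prepend_cols // -opens_cat.
  move=> H; apply: Hn; apply: has_unmatched_eq_brackets H.
  by rewrite !brackets_cat brackets_prepend_cols.
rewrite ER0 HFT; congr Some; apply: (@prepend_cols_inj t 1).
by rewrite ET' prepend_cols_cat Ex' -catA.
Qed.

Lemma crystal_le_prepend_cols N t nu T1 T2 : sorted geq nu -> ssyt N nu T1 ->
  crystal_le N T1 T2 -> crystal_le N (prepend_cols t 1 T1) (prepend_cols t 1 T2).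
Proof.
move=> Hnu + H; elim: H => [T S [i Hi HF] HT|T _|T1' T2' T3 H12 IH12 _ IH23 HT1].
- by apply: rt_step; exists i => //; apply: F_tab_prepend_cols HF; exact: ssyt_rows_ge HT.
- exact: rt_refl.
- exact: rt_trans (IH12 HT1) (IH23 (crystal_le_ssyt HT1 H12)).
Qed.

Lemma prepend_cols_ssyt N t nu a T : 1 <= a -> a + size T <= N.+2 -> rows_ge a T ->
  ssyt N nu T -> ssyt N (map (addn t) nu) (prepend_cols t a T).
Proof.
move=> Ha HaT HT [<- Hrows Hb Hcol]; split.
- by elim: T a {Ha HaT HT Hrows Hb Hcol} => //= R T IH a; rewrite size_cat size_nseq IH.
- elim: T a HT Hrows {Ha HaT Hb Hcol} => //= R T IH a [HR HT] /andP[Hs HTs].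
  rewrite IH // andbT; apply: sorted_leq_cat Hs _; first exact: sorted_nseq.
  by move=> x y /nseqP[-> _]; apply: (allP HR).
- elim: T a Ha HaT HT Hb {Hrows Hcol} => //= R T IH a Ha HaT [_ HT] /andP[HR HTb].
  have -> : all (all (fun x => 1 <= x <= N.+1)) (prepend_cols t a.+1 T).
    by apply: IH => //; lia.
  by rewrite all_cat HR !andbT; apply/allP => z /nseqP[-> _]; lia.
elim: T a Hcol {Ha HaT HT Hrows Hb} => //= R T IH a Hp.
have {}IH := IH a.+1 (path_sorted Hp).
case: T Hp IH => //= D T /andP[HRD _] ->; rewrite andbT.
apply/col_ltP => c; rewrite size_cat size_nseq !nth_cat !size_nseq => Hc.
case: (ltnP c t) => Hct; first by rewrite !nth_nseq Hct.
by apply: (col_ltP _ _ HRD); lia.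
Qed.

Lemma drop_ssyt N t nu S :
  ssyt N nu S -> ssyt N (map (subn^~ t) nu) (map (drop t) S).
Proof.
move=> [<- Hrows Hb Hcol]; split.
- by rewrite -!map_comp; apply: eq_map => R /=; rewrite size_drop.
- by rewrite all_map; apply: sub_all Hrows => R; apply: drop_sorted.
- by rewrite all_map; apply: sub_all Hb => R /allP HR; apply/allP => z /mem_drop /HR.
rewrite sorted_map; apply: sub_sorted Hcol => A B /col_ltP HAB.
by apply/col_ltP => c; rewrite size_drop !nth_drop => Hc; apply: HAB; lia.
Qed.

Lemma prepend_cols_drop t a S X : rows_ge a S -> entrywise_le S (prepend_cols t a X) ->
  all (fun R => t <= size R) S -> S = prepend_cols t a (map (drop t) S).
Proof.
elim: S a X => [|R S IH] a [|R0 X] //=; first by move=> _ [].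
move=> [HR HS] [[_ Esz] Hle] /andP[HRt Ht].
have HRt' : take t R = nseq t a.
  apply: (@eq_from_nth _ 0); first by rewrite size_takel // size_nseq.
  move=> c; rewrite size_takel // => Hct; rewrite nth_take // nth_nseq Hct.
  have Hlb : a <= nth 0 R c := allP HR _ (mem_nth 0 (leq_trans Hct HRt)).
  have := Hle 0 c; rewrite /= nth_cat size_nseq Hct nth_nseq Hct => Hub.
  by apply/eqP; rewrite eqn_leq Hlb Hub.
rewrite -{1}(cat_take_drop t R) HRt'; congr (_ :: _).
by apply: (IH a.+1 X) => //; split=> // r c; exact: (Hle r.+1 c).
Qed.

(** * The maximal tableau *)

(* Each column of height [h] is filled with [N+2-h, ..., N+1]. *)
Fixpoint max_tableau (N : nat) (nu : seq nat) : tableau :=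
  if nu is m :: nu' then
    let L := max_tableau N nu' in
    (map predn (head [::] L) ++ nseq (m - head 0 nu') N.+1) :: L
  else [::].

Lemma size_max_tableau N nu : sorted geq nu -> map size (max_tableau N nu) = nu.
Proof.
elim: nu => //= m nu IH Hs; have {}IH := IH (path_sorted Hs).
rewrite IH size_cat size_map size_nseq; congr (_ :: _).
have -> : size (head [::] (max_tableau N nu)) = head 0 nu.
  by case: (max_tableau N nu) IH => [|R L] <-.
by case: nu Hs {IH} => [|m' nu] /=; [rewrite subn0 | case/andP=> ? _; lia].
Qed.

Lemma max_tableau_bounds N nu :
  all (all (fun x => N.+2 - size nu <= x <= N.+1)) (max_tableau N nu).
Proof.
elim: nu => //= m nu IH.
have Hhd : all (fun x => N.+2 - size nu <= x <= N.+1) (head [::] (max_tableau N nu)).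
  by case: (max_tableau N nu) IH => //= R L /andP[].
rewrite all_cat all_map -andbA; apply/and3P; split.
- by apply: sub_all Hhd => x /=; lia.
- by apply/allP => z /nseqP[-> _]; lia.
- by apply: sub_all IH => R; apply: sub_all => x /=; lia.
Qed.

Lemma max_tableau_ssyt N nu : sorted geq nu -> size nu <= N ->
  ssyt N nu (max_tableau N nu).
Proof.
move=> Hnu HN; split; first exact: size_max_tableau.
- elim: nu Hnu HN => //= m nu IH Hnu HN.
  have := max_tableau_bounds N nu; have := IH (path_sorted Hnu) (ltnW HN).
  case: (max_tableau N nu) => [_ _|B L /= /andP[HB ->] /andP[/allP Hb _]].
    by rewrite /= andbT sorted_nseq.
  have HB' : sorted leq (map predn B) by apply: homo_sorted HB => x y /=; lia.
  rewrite HB !andbT (sorted_leq_cat HB' (sorted_nseq _ (leqnn _))) //.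
  by move=> _ y /mapP[x /Hb Hx ->] /nseqP[-> _]; lia.
- by apply: sub_all (max_tableau_bounds N nu) => R; apply: sub_all => x /=; lia.
elim: nu Hnu HN => //= m nu IH Hnu HN.
have {}IH := IH (path_sorted Hnu) (ltnW HN); have := max_tableau_bounds N nu.
case: (max_tableau N nu) IH => //= B L -> /andP[/allP HB _]; rewrite andbT.
apply/col_ltP => c Hc; rewrite nth_cat size_map Hc (nth_map 0) //.
by have := HB (nth 0 B c) (mem_nth 0 Hc); lia.
Qed.

Lemma count_max_tableau N nu j : size nu <= N.+1 ->
  count_mem j.+1 (flatten (behead (max_tableau N nu))) <=
  count_mem j (flatten (max_tableau N nu)).
Proof.
elim: nu => //= m nu IH HN; have {}IH := IH (ltnW HN).
have := max_tableau_bounds N nu.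
case: (max_tableau N nu) IH => //= B L IH /andP[/allP HB _].
rewrite !count_cat count_map.
have -> : count (preim predn (pred1 j)) B = count_mem j.+1 B.
  by apply: eq_in_count => x Hx /=; have := HB x Hx => ?; apply/eqP/eqP; lia.
by move: IH; rewrite count_cat -addnA leq_add2l => /leq_trans; apply; rewrite leq_addl.
Qed.

Lemma count_row_le v (W R : seq nat) : sorted leq R ->
  ~ has_unmatched v 0 (W ++ R) -> count_mem v W + count_mem v R <= count_mem v.+1 W.
Proof.
move=> HR Hn; have [R1 [R2 [ER H1 H2]]] := sorted_split v.+1 HR.
have HR1 : count_mem v.+1 R1 = 0 by apply/count_memPn/negP => /(allP H1); rewrite ltnn.
have HR2 : count_mem v R2 = 0 by apply/count_memPn/negP => /(allP H2); rewrite ltnn.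
have := @no_unmatched_prefix_count v (W ++ R1) R2; rewrite -catA -ER => /(_ Hn).
by rewrite ER !count_cat HR1 HR2 !addn0.
Qed.

Lemma nth_le_max_row N (R B : seq nat) m : col_lt R B -> all (leq^~ N.+1) R ->
  size R <= size B + m -> forall c, nth 0 R c <= nth 0 (map predn B ++ nseq m N.+1) c.
Proof.
move=> /col_ltP HRB HRN Hsz c; rewrite nth_cat size_map.
case: (ltnP c (size B)) => Hc.
  by rewrite (nth_map 0) //; have := HRB c Hc; lia.
case: (ltnP c (size R)) => HcR; last by rewrite nth_default.
by rewrite nth_nseq ifT; [exact: (allP HRN) _ (mem_nth 0 HcR) | lia].
Qed.

Lemma max_tableau_unique N nu T : sorted geq nu -> size nu <= N -> ssyt N nu T ->
  (forall i, 1 <= i <= N -> ~ has_unmatched i 0 (reading_word T)) ->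
  T = max_tableau N nu.
Proof.
elim: nu T => [|m nu IH] [|R T] Hnu HN [//= Hsz Hrows Hb Hcol] Hdead //.
case: Hsz => HRm Hsz; case/andP: Hrows => HR Hrows; case/andP: Hb => HbR Hb.
have ET : T = max_tableau N nu.
  apply: IH (path_sorted Hnu) (ltnW HN) _ _; first by split=> //; exact: path_sorted Hcol.
  move=> i Hi /(has_unmatched_cat R); rewrite -reading_word_cons; exact: Hdead.
subst T; congr (_ :: _).
have [/= [HQm _] /andP[HQ _] /andP[HbQ _] _] := max_tableau_ssyt Hnu HN.
set B := head [::] (max_tableau N nu) in HQm HQ HbQ *.
set Q := _ ++ _ in HQm HQ HbQ *.
have Hle : forall c, nth 0 R c <= nth 0 Q c.
  apply: nth_le_max_row; last by rewrite HRm -{1}HQm size_cat size_map size_nseq.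
    by rewrite /B; case: (max_tableau N nu) Hcol => //= B' L /andP[].
  by apply: sub_all HbR => x /andP[].
have Hcount : forall v, v <= N -> count_mem v R <= count_mem v Q.
  case=> [_|v Hv].
    have H0 : 0 \notin R by apply/negP => /(allP HbR).
    by rewrite (count_memPn H0).
  have Hv' : 1 <= v.+1 <= N by [].
  have Hn := Hdead _ Hv'; rewrite reading_word_cons in Hn.
  have := count_row_le HR Hn; rewrite count_reading_word.
  have := @count_max_tableau N (m :: nu) v.+1 (ltnW HN).
  by rewrite /= -/B -/Q count_cat count_reading_word; lia.
apply: (@sorted_eq_count N) HR HQ _ Hle Hcount _; first by rewrite HRm HQm.
by apply: sub_all HbQ => x /andP[].
Qed.

Definition tab_sum (T : tableau) : nat := sumn (map sumn T).

Lemma F_tab_sum i T S : F_tab i T = Some S -> tab_sum S = (tab_sum T).+1.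
Proof.
case/F_tab_Some => Top [x [y [Bot [-> -> _ _]]]].
rewrite /tab_sum !map_cat !sumn_cat /= !sumn_cat /=; lia.
Qed.

Lemma tab_sum_ssyt N nu T : ssyt N nu T -> tab_sum T <= N.+1 * sumn nu.
Proof.
case=> <- _ + _; elim: T => //= R T IH /andP[HR /IH HT].
rewrite mulnDr leq_add //; elim: R HR {HT IH} => //= a R IH /andP[/andP[_ Ha] /IH].
by rewrite mulnS; apply: leq_add.
Qed.

Lemma crystal_le_max_tableau N nu T : sorted geq nu -> size nu <= N ->
  ssyt N nu T -> crystal_le N T (max_tableau N nu).
Proof.
move=> Hnu HN HT; have [k Hk] := ubnP (N.+1 * sumn nu - tab_sum T).
elim: k T HT Hk => // k IH T HT Hk.
case: (pickP (fun i : 'I_N => F_tab i.+1 T != None)) => [i|Hdead].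
  case E: (F_tab i.+1 T) => [S|] // _; have Hi : 1 <= i.+1 <= N := ltn_ord i.
  have HS := F_tab_ssyt HT Hi E.
  apply: rt_trans (rt_step _ _ _ _ _) (IH S HS _); first by exists i.+1.
  by have := tab_sum_ssyt HS; rewrite (F_tab_sum E); lia.
rewrite [T in crystal_le _ T _](max_tableau_unique Hnu HN HT); first exact: rt_refl.
case=> // i /= Hi; apply: F_tab_None.
by have /negbFE/eqP := Hdead (Ordinal Hi).
Qed.

(** * Principal ideals *)

Section PrincipalIdeal.

Variables (le : relation tableau) (P Q : tableau -> Prop) (M : tableau).
Variable f : tableau -> tableau.
Hypotheses (le_trans : forall x y z, le x y -> le y z -> le x z) (PM : P M).
Hypothesis f_ideal : forall x, Q x -> P (f x) /\ le (f x) M.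
Hypothesis f_onto : forall y, P y -> le y M -> exists2 x, Q x & f x = y.
Hypothesis f_mono : forall x y, Q x -> Q y -> (le x y <-> le (f x) (f y)).

Lemma is_lattice_principal_ideal : is_lattice P le -> is_lattice Q le.
Proof.
move=> HP x y Qx Qy; have [[Px HxM] [Py HyM]] := (f_ideal Qx, f_ideal Qy).
have [[j [Pj Hxj Hyj Hjmin]] [m [Pm Hmx Hmy Hmmax]]] := HP _ _ Px Py.
split.
- have [u Qu Eu] := f_onto Pj (Hjmin _ PM HxM HyM); subst j.
  exists u; split=> //; [exact/(f_mono Qx Qu) | exact/(f_mono Qy Qu) |].
  move=> z Qz Hxz Hyz; apply/(f_mono Qu Qz)/Hjmin; first exact: (f_ideal Qz).1.
    exact/(f_mono Qx Qz).
  exact/(f_mono Qy Qz).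
- have [u Qu Eu] := f_onto Pm (le_trans Hmx HxM); subst m.
  exists u; split=> //; [exact/(f_mono Qu Qx) | exact/(f_mono Qu Qy) |].
  move=> z Qz Hzx Hzy; apply/(f_mono Qz Qu)/Hmmax; first exact: (f_ideal Qz).1.
    exact/(f_mono Qz Qx).
  exact/(f_mono Qz Qy).
Qed.

End PrincipalIdeal.

(** * Deleting the first columns *)

Section DeleteColumns.

Variables (lam : seq nat) (t n : nat).
Hypotheses (lam_sorted : sorted geq lam) (lam_gt_t : all (fun x => t < x) lam).
Hypothesis lam_size : size lam <= n.

Let mu := map (fun x => x - t) lam.

Lemma mu_sorted : sorted geq mu.
Proof.
by apply: (homo_sorted (f := subn^~ t) (e := geq)) lam_sorted => x y; apply: leq_sub2r.
Qed.

Lemma prepend_cols_ssyt_mu T : ssyt n mu T -> ssyt n lam (prepend_cols t 1 T).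
Proof.
move=> HT; have [Hsz _ _ _] := HT; have HTge := ssyt_rows_ge mu_sorted HT.
have -> : lam = map (addn t) mu.
  rewrite -map_comp map_id_in // => x /(allP lam_gt_t) /=; lia.
apply: prepend_cols_ssyt HT => //.
by rewrite -(size_map size) Hsz size_map; lia.
Qed.

Lemma prepend_cols_le_top T : ssyt n mu T ->
  crystal_le n (prepend_cols t 1 T) (prepend_cols t 1 (max_tableau n mu)).
Proof.
move=> HT; have Hmu : size mu <= n by rewrite size_map.
exact: crystal_le_prepend_cols mu_sorted HT (crystal_le_max_tableau mu_sorted Hmu HT).
Qed.

Lemma prepend_cols_drop_ssyt S X : ssyt n lam S ->
  entrywise_le S (prepend_cols t 1 X) -> S = prepend_cols t 1 (map (drop t) S).
Proof.
move=> HS HSX; apply: prepend_cols_drop (ssyt_rows_ge lam_sorted HS) HSX _.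
have [Hsz _ _ _] := HS; apply/allP => R HR.
have /(allP lam_gt_t) : size R \in lam by rewrite -Hsz; apply: map_f.
exact: ltnW.
Qed.

Lemma crystal_le_prepend_cols_inv T1 T2 : ssyt n mu T1 ->
  crystal_le n (prepend_cols t 1 T1) (prepend_cols t 1 T2) -> crystal_le n T1 T2.
Proof.
move=> HT1 /(clos_rt_rt1n _ _ _ _).
move EX: (prepend_cols t 1 T1) => X; move EY: (prepend_cols t 1 T2) => Y H.
elim: H T1 EX HT1 EY => [X0|X0 X1 Y' [i Hi HF] HXY IH] T1 EX HT1 EY.
  by rewrite -EY in EX; rewrite (prepend_cols_inj EX); apply: rt_refl.
rewrite -EX in HF; have HX1 := F_tab_ssyt (prepend_cols_ssyt_mu HT1) Hi HF.
have EX1 : X1 = prepend_cols t 1 (map (drop t) X1).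
  apply: prepend_cols_drop_ssyt HX1 _; rewrite -EY in HXY.
  exact: crystal_le_entrywise (clos_rt1n_rt _ _ _ _ HXY).
rewrite EX1 in HF.
have HF' := F_tab_prepend_cols_inv (ssyt_rows_ge mu_sorted HT1) HF.
apply: rt_trans (rt_step _ _ _ _ _) (IH _ (esym EX1) (drop_ssyt t HX1) EY).
by exists i.
Qed.

End DeleteColumns.

Theorem lemma5p2 (lam : seq nat) (t n : nat) :
  is_partition lam -> 0 < size lam -> t < last 0 lam -> size lam <= n ->
  let mu := map (fun x => x - t) lam in
  (exists M : tableau, is_SSYT n lam M /\
     exists f : tableau -> tableau,
       [/\ forall T, is_SSYT n mu T -> is_SSYT n lam (f T) /\ crystal_le n (f T) M,
           forall S, is_SSYT n lam S -> crystal_le n S M ->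
             exists2 T, is_SSYT n mu T & f T = S &
           forall T1 T2, is_SSYT n mu T1 -> is_SSYT n mu T2 ->
             (crystal_le n T1 T2 <-> crystal_le n (f T1) (f T2))]) /\
  (~ is_lattice (fun T => is_SSYT n mu T) (crystal_le n) ->
   ~ is_lattice (fun T => is_SSYT n lam T) (crystal_le n)).
Proof.
move=> /andP[Hsorted _] _ Hlast Hsize mu.
have Hgt : all (fun x => t < x) lam.
  by apply: sub_all (sorted_geq_last Hsorted) => x; apply: leq_trans.
have Hmu : sorted geq mu := mu_sorted t Hsorted.
set M := prepend_cols t 1 (max_tableau n mu).
have HM : is_SSYT n lam M.
  by apply/is_SSYTP/prepend_cols_ssyt_mu/max_tableau_ssyt; rewrite ?size_map.
have f_ideal : forall T, is_SSYT n mu T ->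
    is_SSYT n lam (prepend_cols t 1 T) /\ crystal_le n (prepend_cols t 1 T) M.
  move=> T /is_SSYTP HT; split; first exact/is_SSYTP/prepend_cols_ssyt_mu.
  exact: prepend_cols_le_top.
have f_onto : forall S, is_SSYT n lam S -> crystal_le n S M ->
    exists2 T, is_SSYT n mu T & prepend_cols t 1 T = S.
  move=> S /is_SSYTP HS /crystal_le_entrywise HSM.
  exists (map (drop t) S); first exact/is_SSYTP/drop_ssyt.
  exact/esym/(prepend_cols_drop_ssyt Hsorted Hgt HS HSM).
have f_mono : forall T1 T2, is_SSYT n mu T1 -> is_SSYT n mu T2 ->
    (crystal_le n T1 T2 <-> crystal_le n (prepend_cols t 1 T1) (prepend_cols t 1 T2)).
  move=> T1 T2 /is_SSYTP HT1 _; split; first exact: crystal_le_prepend_cols Hmu HT1.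
  exact: crystal_le_prepend_cols_inv HT1.
split; first by exists M; split=> //; exists (prepend_cols t 1).
move=> Hnot Hlat; apply: Hnot.
exact: is_lattice_principal_ideal (@rt_trans _ _) HM f_ideal f_onto f_mono Hlat.
Qed.
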